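(* There exists a constant $c>0$ such that, for every positive integer $t$, every finite graph $G$ with average degree at least $2^{2^{c t^2}}$ contains a subgraph with average degree at least $t$ and girth at least $6$.
   Context: All graphs are finite and simple. The average degree of a graph $G$ is $d(G)=2e(G)/|V(G)|$. The girth of a graph is the length of a shortest cycle in it (a graph without cycles has infinite girth). A subgraph need not be induced. *)

From mathcomp Require Import all_boot.
From Stdlib Require Import Reals.
Set Implicit Arguments. Unset Strict Implicit. Unset Printing Implicit Defensive.

Definition simple_graph (T : finType) (V : {set T}) (e : rel T) : Prop :=
  symmetric e /\ irreflexive e /\ (forall x y, e x y -> (x \in V) && (y \in V)).

Definition edges (T : finType) (e : rel T) : {set {set T}} :=
  [set s : {set T} | [exists x : T, exists y : T, e x y && (s == [set x; y])]].

Definition nedges (T : finType) (e : rel T) : nat := #|edges e|.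

Definition avg_degree (T : finType) (V : {set T}) (e : rel T) : R :=
  (2 * INR (nedges e) / INR #|V|)%R.

Definition subgraph (T : finType) (V' : {set T}) (f : rel T) (V : {set T}) (e : rel T) : Prop :=
  simple_graph V' f /\ V' \subset V /\ (forall x y, f x y -> e x y).

Definition has_cycle_of_length (T : finType) (e : rel T) (k : nat) : Prop :=
  exists s : seq T, size s = k /\ 3 <= k /\ ucycle e s.

Definition girth_ge (T : finType) (e : rel T) (g : nat) : Prop :=
  forall k, k < g -> ~ has_cycle_of_length e k.

(** A density-increment argument. First pass to a bipartite subgraph G (sides X and ~X)
    keeping half of the edges, then repeat: take a maximal C4-free subgraph H of G. If H
    has a subgraph of minimum degree t, that subgraph is the answer, as bipartite and
    C4-free give girth at least 6. Otherwise H is (t-1)-degenerate; orient it along a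
    degeneracy order, so that out-degrees are below t. By maximality every edge uv of G
    outside H closes a path u-a-b-v of H. If neither a nor b is a sink of the orientation,
    {u, v} is reached from some vertex z by directed paths of length at most 3, and there
    are at most 2t^3 such pairs per z. Otherwise, c being the sink, u is an in-neighbour
    of c and v a neighbour of an in-neighbour of c. Averaging over c gives a vertex c such
    that G between its in-neighbourhood I and that second neighbourhood W is still dense,
    up to a factor 12t^2, while c is adjacent to all vertices of I + W on the other side of
    the bipartition (they all lie in I). After 2tp rounds, for a prime t <= p <= 2^(t^2),
    tp of these vertices c are complete to one side, of size at least p^2, of what remains.
    The incidence graph between the points {0..t-1} x F_p and the lines of F_p^2 embeds
    there: it is bipartite, C4-free (two lines meet at most once) and of minimum degree t. *)

From mathcomp Require Import all_boot zify ssralg zmodp.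
(* Reals comes after ssralg so that the scope key %R denotes R_scope; it rebinds [_ ^ _] on
   nat to Nat.pow, whence the re-import of ssrnat. *)
From Stdlib Require Import Reals Lra.
Import ssrnat GRing.Theory.

Set Implicit Arguments. Unset Strict Implicit. Unset Printing Implicit Defensive.

Lemma cards_indicator (T : finType) (P : pred T) : #|[set x | P x]| = \sum_x P x.
Proof. by rewrite -sum1_card big_mkcond; apply: eq_bigr => x _; rewrite inE; case: (P x). Qed.

Lemma exists_le_of_sum_leq (I : finType) (A B : I -> nat) :
  \sum_i B i <= \sum_i A i -> 0 < \sum_i A i -> exists i, B i <= A i /\ 0 < A i.
Proof.
move=> leBA; rewrite lt0n sum_nat_eq0 negb_forall => /existsP [i0 nzA].
case: (pickP (fun i => (B i <= A i) && (0 < A i))) => [i /andP [] | noi]; first by exists i.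
suff : \sum_i A i < \sum_i B i by rewrite ltnNge leBA.
rewrite (bigD1 i0) //= [X in _ < X](bigD1 i0) //= -addSn leq_add //.
  by move/negbT: (noi i0); rewrite lt0n nzA andbT -ltnNge.
apply: leq_sum => i _; case: (posnP (A i)) => [-> // | Api].
by move/negbT: (noi i); rewrite Api andbT -ltnNge => /ltnW.
Qed.

Section Counting.
Variable T : finType.
Implicit Types (g : rel T).

Definition deg g x := #|[set y | g x y]|.

Definition narcs g := #|[set q : T * T | g q.1 q.2]|.

Lemma narcs_sum_deg g : narcs g = \sum_x deg g x.
Proof.
rewrite /narcs cards_indicator -(pair_big xpredT xpredT (fun x y => g x y : nat)) /=.
by apply: eq_bigr => x _; rewrite /deg cards_indicator.
Qed.

Lemma nedges_double g : symmetric g -> irreflexive g -> (nedges g).*2 = narcs g.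
Proof.
move=> gs gi; rewrite /narcs -sum1_card.
rewrite (partition_big (fun q : T * T => [set q.1; q.2]) (mem (edges g))); last first.
  move=> [x y]; rewrite inE /= => gxy; rewrite inE.
  by apply/existsP; exists x; apply/existsP; exists y; rewrite gxy /=.
rewrite /nedges -muln2 -sum_nat_const.
apply: eq_bigr => _ /[!inE] /existsP [x /existsP [y /andP [gxy /eqP ->]]].
have xy : x != y by apply: contraTneq gxy => ->; rewrite gi.
rewrite (eq_bigl (fun q : T * T => (q == (x, y)) || (q == (y, x)))); last first.
  move=> [a b] /=; rewrite inE /=; apply/andP/orP => [[gab /eqP E] | [] /eqP [-> ->]].
  - have ab : a != b by apply: contraTneq gab => ->; rewrite gi.
    have : a \in [set x; y] /\ b \in [set x; y] by rewrite -E !inE !eqxx orbT.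
    case; rewrite !inE => /orP [] /eqP ea /orP [] /eqP eb; move: ab; rewrite ea eb ?eqxx //= => _.
      by left.
    by right.
  - by rewrite gxy.
  - by rewrite gs gxy setUC.
rewrite big_mkcond (bigD1 (x, y)) //= (bigD1 (y, x)) /=; last first.
  by rewrite xpair_eqE negb_and eq_sym xy.
by rewrite !eqxx orbT big1 // => -[a b] /andP [/negbTE -> /negbTE ->].
Qed.

End Counting.

Lemma card_bigcup_leq (T I : finType) (P : pred I) (F : I -> {set T}) :
  #|\bigcup_(i | P i) F i| <= \sum_(i | P i) #|F i|.
Proof.
apply: (big_ind2 (fun (A : {set T}) n => #|A| <= n)); rewrite ?cards0 //.
by move=> A1 n1 A2 n2 h1 h2; apply: leq_trans (leq_card_setU A1 A2) (leq_add h1 h2).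
Qed.

Definition swap_pairs (T : finType) (A : {set T * T}) := [set q | (q.2, q.1) \in A].

Lemma card_swap_pairs (T : finType) (A : {set T * T}) : #|swap_pairs A| = #|A|.
Proof.
have -> : swap_pairs A = [set (q.2, q.1) | q in A].
  apply/setP => -[x y]; rewrite inE /=; apply/idP/imsetP => [xyA | [[a b] abA [-> ->]]] //.
  by exists (y, x).
by apply: card_imset => -[a b] [c d] [-> ->].
Qed.

Lemma card_bigcup_swap_leq (T I : finType) (F : I -> {set T * T}) :
  #|\bigcup_i (F i :|: swap_pairs (F i))| <= (\sum_i #|F i|).*2.
Proof.
apply: leq_trans (card_bigcup_leq _ _) _; rewrite -addnn -big_split leq_sum // => i _.
by apply: leq_trans (leq_card_setU _ _) _; rewrite card_swap_pairs.
Qed.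

Section Girth.
Variable T : finType.
Implicit Types (h : rel T) (X : {set T}).

Definition has_c4 h := [exists a, exists b, exists c, exists d,
  [&& uniq [:: a; b; c; d], h a b, h b c, h c d & h d a]].

Lemma has_c4P h : reflect
  (exists a b c d, [/\ uniq [:: a; b; c; d], h a b, h b c, h c d & h d a]) (has_c4 h).
Proof.
apply: (iffP existsP) => [[a /existsP [b /existsP [c /existsP [d /and5P []]]]] | ].
  by exists a, b, c, d.
move=> [a [b [c [d c4]]]]; exists a; apply/existsP; exists b; apply/existsP; exists c.
by apply/existsP; exists d; apply/and5P.
Qed.

Lemma eq_has_c4 h1 h2 : h1 =2 h2 -> has_c4 h1 = has_c4 h2.
Proof.
move=> e12; apply/has_c4P/has_c4P => -[a [b [c [d c4]]]]; exists a, b, c, d.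
  by rewrite -!e12.
by rewrite !e12.
Qed.

Lemma has_c4S h1 h2 : subrel h1 h2 -> has_c4 h1 -> has_c4 h2.
Proof.
move=> h12 /has_c4P [a [b [c [d [u hab hbc hcd hda]]]]].
by apply/has_c4P; exists a, b, c, d; split; auto.
Qed.

Definition bipartite h X := forall x y, h x y -> (x \in X) != (y \in X).

Lemma girth_ge6_bipartite h X : bipartite h X -> ~~ has_c4 h -> girth_ge h 6.
Proof.
move=> hX /has_c4P noc4 k k6 [s [sz [k3 /andP [cyc un]]]]; rewrite -sz in k6 k3.
case: s k6 k3 cyc un {sz} => [|a [|b [|c [|d [|x [|y s]]]]]] // _ _.
- rewrite /cycle /= => /and4P [hab hbc hca _] _.
  move: (hX _ _ hab) (hX _ _ hbc) (hX _ _ hca).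
  by case: (a \in X); case: (b \in X); case: (c \in X).
- move=> + un; rewrite /cycle /= => /and5P [hab hbc hcd hda _].
  by apply: noc4; exists a, b, c, d.
- rewrite /cycle /= => /and5P [hab hbc hcd hdx /andP [hxa _]] _.
  move: (hX _ _ hab) (hX _ _ hbc) (hX _ _ hcd) (hX _ _ hdx) (hX _ _ hxa).
  by case: (a \in X); case: (b \in X); case: (c \in X); case: (d \in X); case: (x \in X).
Qed.

Lemma avg_degree_ge (V : {set T}) h n : V != set0 ->
  (INR n <= avg_degree V h)%R <-> n * #|V| <= (nedges h).*2.
Proof.
rewrite -card_gt0 => /ltP /lt_0_INR V0.
have E : INR (nedges h).*2 = (avg_degree V h * INR #|V|)%R.
  by rewrite /avg_degree -muln2 mulnE mult_INR /=; field; lra.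
split => [le_avg | /leP /le_INR].
  by apply/leP/INR_le; rewrite E mulnE mult_INR; nra.
by rewrite E mulnE mult_INR; nra.
Qed.

Lemma avg_degree_ge_min_deg (V : {set T}) h n : simple_graph V h -> V != set0 ->
  {in V, forall x, n <= deg h x} -> (INR n <= avg_degree V h)%R.
Proof.
move=> [hs [hi hV]] V0 hdeg; apply/avg_degree_ge => //.
rewrite nedges_double // narcs_sum_deg (bigID (mem V)) /= -[n * _]addn0 leq_add //.
by rewrite mulnC -sum_nat_const; apply: leq_sum.
Qed.

End Girth.

Section MaxCut.
Variable T : finType.
Implicit Types (g : rel T) (X : {set T}).

Definition cut g X := [rel x y | g x y && ((x \in X) != (y \in X))].

Definition flip (x : T) X := if x \in X then X :\ x else x |: X.

Lemma in_flip x X z : (z \in flip x X) = (if z == x then x \notin X else z \in X).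
Proof.
rewrite /flip; have [-> | zx] := eqVneq z x;
  by case: (boolP (x \in X)) => xX; rewrite !inE ?eqxx ?xX ?(negbTE zx).
Qed.

Lemma flipK x : involutive (flip x).
Proof. by move=> X; apply/setP => z; rewrite !in_flip eqxx negbK; case: eqP => [-> |]. Qed.

Lemma card_separating (x y : T) : x != y ->
  (#|[set X : {set T} | (x \in X) != (y \in X)]|).*2 = #|{set T}|.
Proof.
move=> xy; set A := [set X : {set T} | (x \in X) != (y \in X)].
have flipA X : (flip x X \in A) = (X \notin A).
  by rewrite !inE !in_flip eqxx [y == x]eq_sym (negbTE xy); case: (x \in X); case: (y \in X).
have flipA_inj : injective (flip x) := can_inj (flipK x).
have AC : #|A| <= #|~: A|.
  rewrite -(card_imset _ flipA_inj); apply/subset_leq_card/subsetP => _ /imsetP [X XA ->].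
  by rewrite inE flipA XA.
have CA : #|~: A| <= #|A|.
  rewrite -(card_imset _ flipA_inj); apply/subset_leq_card/subsetP => _ /imsetP [X XA ->].
  by rewrite flipA -in_setC.
have CA_eq : #|~: A| = #|A| by apply/eqP; rewrite eqn_leq CA AC.
by rewrite -(cardsC A) CA_eq addnn.
Qed.

Lemma exists_large_cut g : irreflexive g -> exists X, narcs g <= (narcs (cut g X)).*2.
Proof.
move=> gi; have [g0 | gpos] := posnP (narcs g); first by exists set0; rewrite g0.
have sum_cut : \sum_X narcs (cut g X) * 2 = \sum_(X : {set T}) narcs g.
  rewrite -big_distrl sum_nat_const /= (eq_bigr _ (fun X _ => cards_indicator _)).
  rewrite exchange_big big_distrl /narcs cards_indicator big_distrr /=.
  apply: eq_bigr => -[x y] _ /=.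
  have [gxy | _] := boolP (g x y); last by rewrite big1 ?muln0.
  have xy : x != y by apply: contraTneq gxy => ->; rewrite gi.
  rewrite -cards_indicator muln2 muln1 -(card_separating xy).
  by congr (_.*2); apply: eq_card => X; rewrite !inE.
have [X [le_cut _]] : exists X, narcs g <= narcs (cut g X) * 2 /\ 0 < narcs (cut g X) * 2.
  apply: exists_le_of_sum_leq; rewrite sum_cut // sum_nat_const muln_gt0 gpos andbT.
  by apply/card_gt0P; exists set0.
by exists X; rewrite -muln2.
Qed.

End MaxCut.

Section Degeneracy.
Variables (T : finType) (h : rel T) (t : nat).

Lemma core_or_degenerate_in (U : {set T}) :
  (exists2 W : {set T}, W \subset U &
     W != set0 /\ {in W, forall x, t <= #|[set y in W | h x y]|}) \/
  (exists s : seq T, [/\ uniq s, s =i U &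
     {in U, forall x, #|[set y in U | h x y && (index x s < index y s)]| < t}]).
Proof.
move Un: #|U| => n; elim: n U Un => [|n IH] U Un.
  right; exists [::]; move/eqP: Un; rewrite cards_eq0 => /eqP ->.
  by split => // x; rewrite inE.
have [Ucore | ] := boolP [forall x in U, t <= #|[set y in U | h x y]|].
  left; exists U => //; split; last exact/forall_inP.
  by apply/eqP => U0; move: Un; rewrite U0 cards0.
rewrite negb_forall_in => /existsP [x /andP [xU]]; rewrite -ltnNge => small_x.
have Uxn : #|U :\ x| = n by move: Un; rewrite (cardsD1 x) xU add1n => -[].
have [[W WUx core] | [s [us sUx sdeg]]] := IH _ Uxn.
  by left; exists W => //; apply: subset_trans WUx (subsetDl _ _).
right; exists (x :: s); split.
- by rewrite /= us sUx !inE eqxx.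
- by move=> z; rewrite inE sUx !inE; case: eqVneq => // ->.
move=> z zU; have [-> | zx] := eqVneq z x.
  apply: leq_ltn_trans small_x; apply/subset_leq_card/subsetP => y.
  by rewrite !inE => /and3P [-> -> _].
have zUx : z \in U :\ x by rewrite !inE zx.
apply: leq_ltn_trans (sdeg z zUx); apply/subset_leq_card/subsetP => y.
rewrite !inE /=; case: ifPn => [/eqP xz | _]; first by rewrite xz eqxx in zx.
case: ifPn => [_ /and3P [] // | xy /and3P [yU hzy]].
by rewrite ltnS yU hzy andbT eq_sym xy.
Qed.

Lemma core_or_degenerate :
  (exists2 W : {set T}, W != set0 & {in W, forall x, t <= #|[set y in W | h x y]|}) \/
  (exists s : seq T, [/\ uniq s, (forall x, x \in s) &
     forall x, #|[set y | h x y && (index x s < index y s)]| < t]).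
Proof.
have [[W _ []] | [s [us sT sdeg]]] := core_or_degenerate_in [set: T].
  by left; exists W.
right; exists s; split => // [x | x]; first by rewrite sT inE.
by have := sdeg x (in_setT x); congr (_ < _); apply: eq_card => y; rewrite !inE.
Qed.

End Degeneracy.

Section MaximalC4free.
Variable T : finType.
Implicit Types (g h : rel T).

Definition same_edge (x y a b : T) := ((a, b) == (x, y)) || ((a, b) == (y, x)).

Lemma same_edgeC x y a b : same_edge x y a b = same_edge x y b a.
Proof. by rewrite /same_edge !xpair_eqE orbC; congr (_ || _); rewrite andbC. Qed.

Lemma same_edge_mem x y a b u v : same_edge x y a b -> same_edge x y u v -> u \in [:: a; b].
Proof.
by rewrite /same_edge !inE => /orP [] /eqP [-> ->] /orP [] /eqP [-> _]; rewrite eqxx ?orbT.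
Qed.

Lemma c4_through_new_edge h x y : symmetric h -> ~~ has_c4 h ->
    has_c4 [rel a b | h a b || same_edge x y a b] ->
  exists a b, [/\ uniq [:: x; a; b; y], h x a, h a b & h b y].
Proof.
move=> hs /has_c4P noc4 /has_c4P [a [b [c [d [u hab hbc hcd hda]]]]].
have rot4 (p q r w : T) : uniq [:: p; q; r; w] -> uniq [:: q; r; w; p] by rewrite -(rot_uniq 1).
wlog nab : a b c d u hab hbc hcd hda / same_edge x y a b => [gen | ].
  case/orP: (hab) => [h_ab | nab]; last exact: (gen a b c d).
  case/orP: (hbc) => [h_bc | nbc]; first case/orP: (hcd) => [h_cd | ncd].
  - case/orP: (hda) => [h_da | nda]; first by case: noc4; exists a, b, c, d.
    exact: (gen d a b c (rot4 _ _ _ _ (rot4 _ _ _ _ (rot4 _ _ _ _ u))) hda hab hbc hcd).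
  - exact: (gen c d a b (rot4 _ _ _ _ (rot4 _ _ _ _ u)) hcd hda hab hbc).
  - exact: (gen b c d a (rot4 _ _ _ _ u) hbc hcd hda hab).
have old p q : p \notin [:: a; b] -> h p q || same_edge x y p q -> h p q.
  by move=> pab /orP [// | npq]; case/negP: pab; apply: same_edge_mem nab npq.
have [c_ab d_ab] : c \notin [:: a; b] /\ d \notin [:: a; b].
  have := rot4 _ _ _ _ (rot4 _ _ _ _ u); rewrite /= !inE.
  by case/and4P => /norP [_ ->] -> _ _.
have {}hbc : h c b by apply: old; rewrite // hs same_edgeC.
have {}hcd : h c d := old _ _ c_ab hcd.
have {}hda : h d a := old _ _ d_ab hda.
case/orP: nab => /eqP [<- <-].
  exists d, c; split; rewrite // 1?hs //.
  by rewrite -rev_uniq /=; apply: rot4.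
by exists c, d; split; rewrite // 1?hs //; apply: rot4.
Qed.

Definition arcs_rel (S : {set T * T}) : rel T := fun x y => (x, y) \in S.

Definition c4free_arcs g (S : {set T * T}) :=
  [&& S \subset [set q | g q.1 q.2], [forall q in S, (q.2, q.1) \in S] & ~~ has_c4 (arcs_rel S)].

Lemma exists_maximal_c4free g : symmetric g -> irreflexive g ->
  exists h, [/\ symmetric h, subrel h g, ~~ has_c4 h &
    forall x y, g x y -> ~~ h x y -> exists a b, [/\ uniq [:: x; a; b; y], h x a, h a b & h b y]].
Proof.
move=> gs gi.
have c4free0 : c4free_arcs g set0.
  rewrite /c4free_arcs sub0set /=; apply/andP; split; first by apply/forall_inP => q; rewrite inE.
  by apply/has_c4P => -[a [b [c [d [_]]]]]; rewrite /arcs_rel inE.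
have [S /and3P [Sg /forall_inP Ssym noc4] Smax] := arg_maxnP (fun S : {set T * T} => #|S|) c4free0.
have Ss : symmetric (arcs_rel S) by move=> x y; apply/idP/idP => /Ssym.
have Sg' : subrel (arcs_rel S) g by move=> x y /(subsetP Sg); rewrite inE.
exists (arcs_rel S); split=> [// | // | // | x y gxy xyS]; apply: (c4_through_new_edge Ss noc4).
have {}xyS : (x, y) \notin S by [].
have yxS : (y, x) \notin S by rewrite -[_ \in S]/(arcs_rel S y x) Ss.
have xy_yx : (x, y) != (y, x) by apply: contraTneq gxy => -[->]; rewrite gi.
set S' := (x, y) |: ((y, x) |: S).
have S'g : S' \subset [set q | g q.1 q.2].
  apply/subsetP => -[a b]; rewrite !inE => /or3P [/eqP [-> ->] | /eqP [-> ->] | /Sg'] //=.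
  by rewrite gs.
have S'sym : [forall q in S', (q.2, q.1) \in S'].
  apply/forall_inP => q; rewrite !inE => /or3P [/eqP -> | /eqP -> | /Ssym ->];
  by rewrite ?eqxx ?orbT.
have : ~~ c4free_arcs g S'.
  apply/negP => /Smax; apply/negP; rewrite -ltnNge !cardsU1 !inE negb_or xy_yx xyS yxS.
  by rewrite !add1n ltnS leqnSn.
rewrite /c4free_arcs S'g S'sym negbK; congr is_true; apply: eq_has_c4 => a b.
by rewrite /arcs_rel /same_edge !inE /= orbA orbC.
Qed.

End MaximalC4free.

Section DegenerateOrientation.
Variables (T : finType) (h : rel T) (s : seq T).
Hypotheses (hs : symmetric h) (hi : irreflexive h) (s_all : forall x, x \in s).

Local Notation rank x := (index x s).

Definition outN z := [set y | h z y && (rank z < rank y)].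
Definition inN z := [set y | h z y && (rank y < rank z)].
Definition outN2 z := \bigcup_(y in outN z) outN y.
Definition outN3 z := \bigcup_(y in outN z) outN2 y.

Definition fan_pairs z := setX [set z] (outN3 z) :|: setX (outN z) (outN2 z).

Definition second_nbhd c := (\bigcup_(b in inN c) (inN b :|: outN b)) :\ c.

(* Where the pair {u, v} closing a path u-a-b-v of h ends up: among the fan pairs of some z
   if neither a nor b is a sink of the orientation, in inN c x second_nbhd c for the sink c
   otherwise. *)
Definition carried u v :=
  [exists z, ((u, v) \in fan_pairs z) || ((v, u) \in fan_pairs z)] ||
  [exists c, ((u \in inN c) && (v \in second_nbhd c)) ||
             ((v \in inN c) && (u \in second_nbhd c))].

Lemma carriedC u v : carried u v = carried v u.
Proof. by congr (_ || _); apply: eq_existsb => z; rewrite orbC. Qed.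

Lemma edge_rank x y : h x y -> (rank x < rank y) || (rank y < rank x).
Proof.
move=> hxy; rewrite -neq_ltn; apply: contraTneq hxy => /(index_inj x (s_all x) (s_all y)) ->.
by rewrite hi.
Qed.

Lemma nbhd_inN_outN z y : h z y -> y \in inN z :|: outN z.
Proof. by move=> hzy; rewrite !inE hzy orbC edge_rank. Qed.

Lemma carried_path3_up u a b v : u != b -> h u a -> h a b -> h b v -> rank a < rank b ->
  carried u v.
Proof.
move=> ub hua hab hbv ab.
have b_out : b \in outN a by rewrite inE hab.
have v_out2 : rank b < rank v -> v \in outN2 a.
  by move=> bv; rewrite /outN2; apply/bigcupP; exists b; rewrite // inE hbv.
case/orP: (edge_rank hbv) => [bv | vb].
  apply/orP; left; apply/existsP; rewrite /fan_pairs.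
  case/orP: (edge_rank hua) => [ua | au].
    exists u; rewrite in_setU in_setX in_set1 eqxx /= /outN3 -orbA; apply/orP; left.
    by apply/bigcupP; exists a; rewrite ?inE ?hua ?v_out2.
  have u_out : u \in outN a by rewrite inE hs hua au.
  by exists a; rewrite !in_setU !in_setX u_out v_out2 ?orbT.
have v_in : v \in inN b by rewrite inE hbv vb.
apply/orP; right; apply/existsP; exists b.
apply/orP; right; rewrite v_in /second_nbhd in_setD1 ub /=; apply/bigcupP; exists a.
  by rewrite inE hs hab.
by rewrite nbhd_inN_outN // hs.
Qed.

Lemma carried_path3 u a b v : uniq [:: u; a; b; v] -> h u a -> h a b -> h b v -> carried u v.
Proof.
rewrite /= !inE => /and4P [/norP [_ /norP [ub _]] /norP [_ av] _ _] hua hab hbv.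
case/orP: (edge_rank hab) => [ab | ba]; first exact: carried_path3_up ub hua hab hbv ab.
by rewrite carriedC; apply: (carried_path3_up (a := b) (b := a)); rewrite 1?eq_sym // hs.
Qed.

Lemma sum_inN_weighted (F : T -> nat) :
  \sum_c \sum_(b in inN c) F b = \sum_b #|outN b| * F b.
Proof.
under eq_bigr => c _ do rewrite big_mkcond /=.
rewrite exchange_big; apply: eq_bigr => b _; rewrite cards_indicator big_distrl /=.
by apply: eq_bigr => c _; rewrite !inE hs; case: (_ && _); rewrite ?mul1n.
Qed.

Lemma sum_inN : \sum_c #|inN c| = \sum_b #|outN b|.
Proof.
have := sum_inN_weighted (fun _ => 1); under eq_bigr => c _ do rewrite sum1_card.
by move=> ->; under eq_bigr => b _ do rewrite muln1.
Qed.

Section Cover.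
Variable g : rel T.
Hypotheses (gs : symmetric g) (g_closes_c4 : forall x y, g x y -> ~~ h x y ->
  exists a b, [/\ uniq [:: x; a; b; y], h x a, h a b & h b y]).

Definition link c := [set q : T * T | [&& g q.1 q.2, q.1 \in inN c & q.2 \in second_nbhd c]].

Lemma in_link c u v : ((u, v) \in link c) = [&& g u v, u \in inN c & v \in second_nbhd c].
Proof. by rewrite /link in_set. Qed.

Lemma narcs_cover :
  narcs g <= narcs h + (\sum_z #|fan_pairs z|).*2 + (\sum_c #|link c|).*2.
Proof.
have cover : [set q : T * T | g q.1 q.2] \subset [set q | h q.1 q.2]
    :|: \bigcup_z (fan_pairs z :|: swap_pairs (fan_pairs z))
    :|: \bigcup_c (link c :|: swap_pairs (link c)).
  apply/subsetP => -[u v]; rewrite inE /= => guv.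
  have [huv | nhuv] := boolP (h u v); first by rewrite !in_setU in_set huv.
  have [a [b [un hua hab hbv]]] := g_closes_c4 guv nhuv.
  rewrite !in_setU; apply/orP; case/orP: (carried_path3 un hua hab hbv) => /existsP [z zuv].
    left; apply/orP; right; apply/bigcupP; exists z => //.
    by rewrite in_setU /swap_pairs in_set.
  right; apply/bigcupP; exists z => //.
  by rewrite in_setU /swap_pairs in_set !in_link /= [g v u]gs guv.
rewrite /narcs; apply: leq_trans (subset_leq_card cover) _.
apply: leq_trans (leq_card_setU _ _) (leq_add _ (card_bigcup_swap_leq _)).
exact: leq_trans (leq_card_setU _ _) (leq_add _ (card_bigcup_swap_leq _)).
Qed.

End Cover.

Lemma card_fan_pairs_leq z : #|fan_pairs z| <= #|outN3 z| + #|outN z| * #|outN2 z|.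
Proof. by apply: leq_trans (leq_card_setU _ _) _; rewrite !cardsX cards1 mul1n. Qed.

Variables (V : {set T}) (t : nat).
Hypotheses (hV : forall x y, h x y -> x \in V) (small_outN : forall z, #|outN z| < t).

Lemma outN_notin z : z \notin V -> outN z = set0.
Proof. by move=> zV; apply/setP => y; rewrite !inE; apply: contraNF zV => /andP [/hV]. Qed.

Lemma sum_in_support (F : T -> nat) : (forall z, z \notin V -> F z = 0) ->
  \sum_z F z = \sum_(z in V) F z.
Proof. by move=> F0; rewrite (bigID (mem V)) /= [X in _ + X]big1 ?addn0. Qed.

Lemma card_bigcup_outN z (F : T -> {set T}) k : (forall y, #|F y| <= k) ->
  #|\bigcup_(y in outN z) F y| <= t * k.
Proof.
move=> leF; apply: leq_trans (card_bigcup_leq _ _) _.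
apply: (@leq_trans (\sum_(y in outN z) k)); first exact: leq_sum.
by rewrite sum_nat_const leq_mul2r (ltnW (small_outN z)) orbT.
Qed.

Lemma card_outN2 z : #|outN2 z| <= t * t.
Proof. by apply: card_bigcup_outN => y; apply: ltnW. Qed.

Lemma card_outN3 z : #|outN3 z| <= t * (t * t).
Proof. exact: card_bigcup_outN card_outN2. Qed.

Lemma card_fan_pairs z : #|fan_pairs z| <= (t * (t * t)).*2.
Proof.
apply: leq_trans (card_fan_pairs_leq z) _.
by rewrite -addnn leq_add ?card_outN3 // leq_mul ?card_outN2 // ltnW.
Qed.

Lemma sum_outN : \sum_z #|outN z| <= t * #|V|.
Proof.
rewrite sum_in_support => [|z /outN_notin ->]; last by rewrite cards0.
by rewrite mulnC -sum_nat_const; apply: leq_sum => z _; apply: ltnW.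
Qed.

Lemma sum_fan_pairs : \sum_z #|fan_pairs z| <= (t * (t * t)).*2 * #|V|.
Proof.
rewrite sum_in_support => [|z zV]; last first.
  apply/eqP; rewrite -leqn0; apply: leq_trans (card_fan_pairs_leq z) _.
  by rewrite /outN3 outN_notin // big_set0 cards0.
by rewrite mulnC -sum_nat_const; apply: leq_sum => z _; apply: card_fan_pairs.
Qed.

Lemma sum_second_nbhd : \sum_c #|second_nbhd c| <= (t * t).*2 * #|V|.
Proof.
apply: (@leq_trans (\sum_c \sum_(b in inN c) (#|inN b| + #|outN b|))).
  apply: leq_sum => c _; apply: leq_trans (subset_leq_card (subsetDl _ _)) _.
  apply: leq_trans (card_bigcup_leq _ _) _; apply: leq_sum => b _; exact: leq_card_setU.
rewrite sum_inN_weighted.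
apply: (@leq_trans (\sum_b t * (#|inN b| + #|outN b|))).
  by apply: leq_sum => b _; rewrite leq_mul2r (ltnW (small_outN b)) orbT.
rewrite -big_distrr big_split /= sum_inN addnn -doubleMr -doubleMl leq_double -mulnA leq_mul2l.
by rewrite sum_outN orbT.
Qed.

Lemma narcs_degenerate : narcs h <= (t * #|V|).*2.
Proof.
rewrite narcs_sum_deg; apply: (@leq_trans (\sum_x (#|inN x| + #|outN x|))).
  apply: leq_sum => x _; apply: leq_trans (leq_card_setU _ _).
  by apply/subset_leq_card/subsetP => y; rewrite inE; apply: nbhd_inN_outN.
by rewrite big_split /= sum_inN addnn leq_double sum_outN.
Qed.

End DegenerateOrientation.

Lemma links_dominate_arith t M N v G H R L : 0 < t -> 12 * (t * (t * t)) * M <= N ->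
  N * v <= M * G -> G <= H + R.*2 + L.*2 -> H <= (t * v).*2 -> R <= (t * (t * t)).*2 * v ->
  N * v <= 4 * (M * L).
Proof.
move=> t0 NM NG GHRL Htv RT.
have MG : M * G <= M * H + 2 * (M * R) + 2 * (M * L) by nia.
have MH : M * H <= 2 * (t * (t * t) * M * v).
  have : t <= t * (t * t) by nia.
  nia.
have MR : M * R <= 2 * (t * (t * t) * M * v) by nia.
have Nv : 12 * (t * (t * t) * M * v) <= N * v by nia.
lia.
Qed.

Lemma link_weights_arith t M N v L O S : 0 < t -> N * v <= 4 * (M * L) ->
  O <= t * v -> S <= (t * t).*2 * v -> N * (O + S) <= 12 * (t * t) * M * L.
Proof.
move=> t0 NL Ov Sv.
have Ot : O <= t * t * v by apply: leq_trans Ov _; rewrite leq_mul2r leq_pmull ?orbT.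
have NOS := leq_mul (leqnn N) (leq_add Ot Sv).
have := leq_mul (leqnn (3 * (t * t))) NL.
lia.
Qed.

Definition has_dense_girth6_subgraph (T : finType) (V0 : {set T}) (e : rel T) (t : nat) :=
  exists (V' : {set T}) (f : rel T),
    subgraph V' f V0 e /\ V' != set0 /\ (INR t <= avg_degree V' f)%R /\ girth_ge f 6.

Section DensityIncrement.
Variables (T : finType) (e : rel T) (t : nat) (V0 X : {set T}).
Hypothesis t_gt0 : 0 < t.

Definition bip_graph (g : rel T) (V : {set T}) :=
  [/\ symmetric g, irreflexive g, subrel g e, bipartite g X & forall x y, g x y -> x \in V].

Lemma core_witness (h : rel T) (W : {set T}) :
  symmetric h -> irreflexive h -> subrel h e -> bipartite h X -> ~~ has_c4 h ->
  W \subset V0 -> W != set0 -> {in W, forall x, t <= #|[set y in W | h x y]|} ->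
  has_dense_girth6_subgraph V0 e t.
Proof.
move=> hs hi he hX noc4 WV0 W0 Wdeg.
pose f := [rel x y | [&& x \in W, y \in W & h x y]].
have fh : subrel f h by move=> x y /and3P [].
have f_simple : simple_graph W f.
  split; [|split] => [x y | x | x y /and3P [-> -> _] //] /=; first by rewrite hs andbCA.
  by rewrite hi !andbF.
exists W, f; split; first by split; last split => // x y /fh /he.
split => //; split.
  apply: avg_degree_ge_min_deg => // x xW; apply: leq_trans (Wdeg x xW) _.
  by apply/subset_leq_card/subsetP => y; rewrite !inE /= xW.
apply: (girth_ge6_bipartite (X := X)) => [x y /fh /hX // |].
by apply: contra noc4; apply: has_c4S.
Qed.

Definition increment (g : rel T) (V : {set T}) (N K : nat) :=
  exists c (g' : rel T) (V' : {set T}),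
    [/\ c \in V, c \notin V', V' \subset V, bip_graph g' V' &
        [/\ V' != set0, N * #|V'| <= K * narcs g' &
            {in V', forall y, (y \in X) != (c \in X) -> e c y}]].

Lemma link_increment g V h s c N K :
  bip_graph g V -> symmetric h -> irreflexive h -> subrel h g ->
  N * (#|inN h s c| + #|second_nbhd h s c|) <= K * #|link h s g c| ->
  0 < #|link h s g c| -> increment g V N K.
Proof.
move=> [gs gi ge gX gV] hs hi hg Nc Lc.
set I := inN h s c; set W := second_nbhd h s c.
have hI y : y \in I -> h c y by rewrite inE => /andP [].
have hW y : y \in W -> y != c /\ exists2 b, h c b & h b y.
  rewrite /W /second_nbhd in_setD1 => /andP [yc /bigcupP [b bI yb]]; split => //.
  by exists b; [exact: hI | move: yb; rewrite in_setU !inE hs => /orP [] /andP []].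
have [[q1 q2]] : exists q, q \in link h s g c by apply/set0Pn; rewrite -card_gt0.
rewrite in_link => /and3P [gq q1I q2W].
pose g' := [rel x y | g x y && (((x \in I) && (y \in W)) || ((y \in I) && (x \in W)))].
exists c, g', (I :|: W); split.
- exact: gV (hg _ _ (hI _ q1I)).
- rewrite in_setU negb_or; apply/andP; split; first by apply: contraFN (hi c) => /hI.
  by apply/negP => /hW [/eqP].
- apply/subsetP => y; rewrite in_setU => /orP [/hI | /hW [_ [b _]]];
  by rewrite hs => /hg /gV.
- split => [x y | x | x y /andP [/ge] | x y /andP [/gX] | x y /andP [_]] //=.
  + by rewrite gs orbC.
  + by rewrite gi.
  + by case/orP => /andP [xI yW]; rewrite in_setU ?xI ?yW ?orbT.
split.
- by apply/set0Pn; exists q1; rewrite in_setU q1I.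
- apply: leq_trans (leq_mul (leqnn N) (leq_card_setU I W)) _.
  apply: leq_trans Nc _; rewrite leq_mul2l; apply/orP; right.
  apply/subset_leq_card/subsetP => -[x y]; rewrite in_link inE /= => /and3P [gxy xI yW].
  by rewrite gxy xI yW.
move=> y; rewrite in_setU => /orP [/hI hcy _ | /hW [_ [b hcb hby]]]; first exact/ge/hg.
move: (gX _ _ (hg _ _ hcb)) (gX _ _ (hg _ _ hby)).
by case: (c \in X); case: (b \in X); case: (y \in X).
Qed.

Lemma density_increment g V N M : 0 < M -> 12 * (t * (t * t)) * M <= N ->
  bip_graph g V -> V \subset V0 -> V != set0 -> N * #|V| <= M * narcs g ->
  has_dense_girth6_subgraph V0 e t \/ increment g V N (12 * (t * t) * M).
Proof.
move=> M_gt0 NM gV_bip VV0 V_ne0 dense; have [gs gi ge gX gV] := gV_bip.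
have [h [hs hg noc4 h_max]] := exists_maximal_c4free gs gi.
have hi : irreflexive h by move=> x; apply/negbTE/negP => /hg; rewrite gi.
have hV x y : h x y -> x \in V by move/hg/gV.
have [[W W_ne0 Wdeg] | [s [_ s_all small_outN]]] := core_or_degenerate h t.
  left; apply: (core_witness hs hi _ _ noc4 _ W_ne0 Wdeg) => [x y /hg /ge | x y /hg /gX |] //.
  apply/subsetP => x xW; apply: (subsetP VV0).
  have : 0 < #|[set y in W | h x y]| by apply: leq_trans t_gt0 (Wdeg x xW).
  by rewrite card_gt0 => /set0Pn [y]; rewrite inE => /andP [_ /hV].
have {}small_outN z : #|outN h s z| < t := small_outN z.
right; set L := \sum_c #|link h s g c|.
have NL : N * #|V| <= 4 * (M * L).
  apply: links_dominate_arith t_gt0 NM dense (narcs_cover hs hi s_all gs h_max) _ _.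
    exact (narcs_degenerate hs hi s_all hV small_outN).
  exact (sum_fan_pairs hV small_outN).
have NV_gt0 : 0 < N * #|V|.
  by rewrite muln_gt0 card_gt0 V_ne0 andbT; apply: leq_trans NM; rewrite !muln_gt0 t_gt0 M_gt0.
have L_gt0 : 0 < L.
  by move: (leq_trans NV_gt0 NL); rewrite !muln_gt0 => /andP [_ /andP [_ ->]].
have [c [Nc Lc]] : exists c, N * (#|inN h s c| + #|second_nbhd h s c|) <=
    12 * (t * t) * M * #|link h s g c| /\ 0 < 12 * (t * t) * M * #|link h s g c|.
  apply: exists_le_of_sum_leq; last by rewrite -big_distrr !muln_gt0 t_gt0 M_gt0 L_gt0.
  rewrite -!big_distrr big_split /= sum_inN //.
  apply: link_weights_arith t_gt0 NL (sum_outN hV small_outN) (sum_second_nbhd hs hV small_outN).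
apply: (link_increment (s := s) (c := c) gV_bip hs hi hg Nc).
by move: Lc; rewrite muln_gt0 => /andP [].
Qed.

End DensityIncrement.

Section Lines.
Local Open Scope ring_scope.
Variables (p : nat) (p_prime : prime p).

(* The line q = (a, b) of F_p^2 is {(i, a + i b)}; only the columns i < t are used. *)
Definition line_at t (q : 'F_p * 'F_p) (i : 'I_t) : 'F_p := q.1 + (i : nat)%:R * q.2.

Lemma Fp_natr_inj (i j : nat) : (i < p)%N -> (j < p)%N -> (i%:R == j%:R :> 'F_p) = (i == j).
Proof. by move=> ip jp; rewrite -(inj_eq val_inj) /= !val_Fp_nat // !modn_small. Qed.

Lemma lines_meet_once t (q1 q2 : 'F_p * 'F_p) (i j : 'I_t) : (t <= p)%N -> i != j ->
  line_at q1 i = line_at q2 i -> line_at q1 j = line_at q2 j -> q1 = q2.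
Proof.
move=> tp ij; case: q1 q2 => [a1 b1] [a2 b2]; rewrite /line_at /= => E1 E2.
have ij_Fp : (i%:R - j%:R : 'F_p) != 0.
  by rewrite subr_eq0 Fp_natr_inj ?(leq_trans (ltn_ord _) tp).
have Eb : b1 = b2.
  apply: (mulfI ij_Fp); rewrite !mulrBl -(addrKA a1 (i%:R * b1)) -(addrKA a2 (i%:R * b2)).
  by rewrite [i%:R * b1 + a1]addrC [i%:R * b2 + a2]addrC E1 E2.
by move: E1; rewrite Eb => /addIr ->.
Qed.

Definition line_via t (i : 'I_t) (v b : 'F_p) : 'F_p * 'F_p := (v - (i : nat)%:R * b, b).

Lemma line_via_at t (i : 'I_t) (v b : 'F_p) : line_at (line_via i v b) i = v.
Proof. by rewrite /line_at /= subrK. Qed.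
End Lines.

Section Incidence.
Variables (T : finType) (p t : nat).
Hypotheses (p_prime : prime p) (t_gt0 : 0 < t) (t_le_p : t <= p).
Variables (pt : 'I_t * 'F_p -> T) (ln : 'F_p * 'F_p -> T).
Hypotheses (pt_inj : injective pt) (ln_inj : injective ln) (pt_neq_ln : forall u q, pt u != ln q).

Definition on_line x y := [exists q, exists i : 'I_t, (x == ln q) && (y == pt (i, line_at q i))].

Definition incidence := [rel x y | on_line x y || on_line y x].

Lemma on_lineP x y : reflect (exists q i, x = ln q /\ y = pt (i, line_at q i)) (on_line x y).
Proof.
apply: (iffP existsP) => [[q /existsP [i /andP [/eqP -> /eqP ->]]] | [q [i [-> ->]]]].
  by exists q, i.
by exists q; apply/existsP; exists i; rewrite !eqxx.
Qed.

Lemma incidence_sym : symmetric incidence.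
Proof. by move=> x y; rewrite /= orbC. Qed.

Lemma incidence_irr : irreflexive incidence.
Proof.
move=> x; rewrite /= orbb; apply/negbTE/on_lineP => -[q [i [-> /eqP]]].
by rewrite eq_sym (negbTE (pt_neq_ln _ _)).
Qed.

Lemma incidence_ln q y : incidence (ln q) y -> exists i, y = pt (i, line_at q i).
Proof.
case/orP => /on_lineP [q' [i [E1 E2]]]; first by exists i; rewrite E2 (ln_inj E1).
by move/eqP: E2; rewrite eq_sym (negbTE (pt_neq_ln _ _)).
Qed.

Lemma incidence_pt u y : incidence (pt u) y -> exists2 q, y = ln q & u.2 = line_at q u.1.
Proof.
case/orP => /on_lineP [q [i [E1 E2]]]; first by move/eqP: E1; rewrite (negbTE (pt_neq_ln _ _)).
by exists q => //; rewrite (pt_inj E2).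
Qed.

Definition points := [set pt u | u : 'I_t * 'F_p].

Lemma incidence_bipartite : bipartite incidence points.
Proof.
have ln_points q : ln q \notin points.
  by apply/imsetP => -[u _ /eqP]; rewrite eq_sym (negbTE (pt_neq_ln _ _)).
by move=> x y /orP [] /on_lineP [q [i [-> ->]]]; rewrite (negbTE (ln_points q)) imset_f.
Qed.

Lemma incidence_c4free : ~~ has_c4 incidence.
Proof.
apply/has_c4P => -[a [b [c [d [u hab hbc hcd hda]]]]].
have rot4 (x y z w : T) : uniq [:: x; y; z; w] -> uniq [:: y; z; w; x] by rewrite -(rot_uniq 1).
wlog [q1 a_ln] : a b c d u hab hbc hcd hda / exists q, a = ln q => [gen | ].
  case/orP: (hab) => /on_lineP [q [i [E _]]].
    by apply: (gen a b c d) => //; exists q.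
  by apply: (gen b c d a (rot4 _ _ _ _ u)) => //; exists q.
subst a; have [i b_pt] := incidence_ln hab; subst b.
have [q2 c_ln line_i] := incidence_pt hbc; subst c.
have [j d_pt] := incidence_ln hcd; subst d.
have [q3 /ln_inj eq13 line_j] := incidence_pt hda; subst q3.
move: u; rewrite /= !inE => /and4P [/norP [_ /norP [a_c _]] /norP [_ b_d] _ _].
rewrite /= in line_i line_j.
have ij : i != j by apply: contraNneq b_d => eij; rewrite -eij line_i.
have q12 := lines_meet_once p_prime t_le_p ij line_i (esym line_j).
by rewrite q12 eqxx in a_c.
Qed.

Lemma incidence_deg x y : incidence x y -> t <= deg incidence x.
Proof.
case/orP => [/on_lineP [q [i [-> _]]] | /on_lineP [q [i [_ ->]]]].
  have <- : #|[set pt (k, line_at q k) | k : 'I_t]| = t.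
    by rewrite card_imset ?card_ord // => k1 k2 /pt_inj [].
  apply/subset_leq_card/subsetP => _ /imsetP [k _ ->]; rewrite inE.
  by apply/orP; left; apply/on_lineP; exists q, k.
set lines_through := [set ln (line_via i (line_at q i) b) | b : 'F_p].
apply: (leq_trans t_le_p); apply: (@leq_trans #|lines_through|).
  by rewrite card_imset ?card_Fp // => b1 b2 /ln_inj [].
apply/subset_leq_card/subsetP => _ /imsetP [b _ ->]; rewrite inE; apply/orP; right.
by apply/on_lineP; exists (line_via i (line_at q i) b), i; rewrite line_via_at.
Qed.

Lemma incidence_witness (e : rel T) (V0 : {set T}) :
  (forall u q, e (pt u) (ln q) && e (ln q) (pt u)) ->
  (forall u, pt u \in V0) -> (forall q, ln q \in V0) ->
  has_dense_girth6_subgraph V0 e t.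
Proof.
move=> e_pl ptV0 lnV0; pose V' := [set x | [exists y, incidence x y]].
have inV' x y : incidence x y -> x \in V' by move=> xy; rewrite inE; apply/existsP; exists y.
have simple : simple_graph V' incidence.
  split; [exact: incidence_sym | split; [exact: incidence_irr |]].
  by move=> x y xy; rewrite (inV' _ _ xy) (inV' y x) // [incidence _ _]incidence_sym.
have V'_ne0 : V' != set0.
  pose q0 : 'F_p * 'F_p := (inZp 0, inZp 0); pose i0 : 'I_t := Ordinal t_gt0.
  apply/set0Pn; exists (ln q0); apply: (inV' _ (pt (i0, line_at q0 i0))).
  by apply/orP; left; apply/on_lineP; exists q0, i0.
exists V', incidence; split.
  split => //; split => [|x y].
    apply/subsetP => x /[!inE] /existsP [y /orP [/on_lineP [q [i [-> _]]] | ]].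
      exact: lnV0.
    by move=> /on_lineP [q [i [_ ->]]]; apply: ptV0.
  by case/orP => /on_lineP [q [i [-> ->]]]; case/andP: (e_pl (i, line_at q i) q).
split => //; split.
  by apply: avg_degree_ge_min_deg => // x /[!inE] /existsP [y /incidence_deg].
exact: girth_ge6_bipartite incidence_bipartite incidence_c4free.
Qed.

End Incidence.

Lemma exists_injection (T U : finType) (A : {set T}) :
  #|U| <= #|A| -> exists2 f : U -> T, injective f & forall u, f u \in A.
Proof.
move=> UA; exists (fun u => enum_val (widen_ord UA (enum_rank u))).
  by move=> u v /enum_val_inj [] /ord_inj /enum_rank_inj.
by move=> u; apply: enum_valP.
Qed.

Section Iteration.
Variables (T : finType) (e : rel T) (t : nat) (V0 X : {set T}).
Hypotheses (e_sym : symmetric e) (t_gt0 : 0 < t).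

Definition stage N j := exists (g : rel T) (V P Q : {set T}),
  [/\ [/\ bip_graph e X g V, V \subset V0, V != set0 &
         N * #|V| <= (12 * (t * t)) ^ j * narcs g],
      [/\ [disjoint P & V], [disjoint Q & V], P \subset V0, Q \subset V0 & #|P| + #|Q| = j],
      {in P & V, forall x y, y \in X -> e x y} &
      {in Q & V, forall x y, y \notin X -> e x y}].

Lemma stage_step N L j : 12 * (t * (t * t)) * (12 * (t * t)) ^ L <= N -> j < L ->
  stage N j -> has_dense_girth6_subgraph V0 e t \/ stage N j.+1.
Proof.
move=> NL jL [g [V [P [Q [[gV VV0 V_ne0 dense] [PV QV PV0 QV0 PQj] Pe Qe]]]]].
have M_gt0 : 0 < (12 * (t * t)) ^ j by rewrite expn_gt0 !muln_gt0 t_gt0.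
have NM : 12 * (t * (t * t)) * (12 * (t * t)) ^ j <= N.
  apply: leq_trans NL; rewrite leq_mul2l; apply/orP; right.
  by apply: leq_pexp2l; [rewrite !muln_gt0 t_gt0 | exact: ltnW].
have [|[c [g' [V' [cV cV' V'V g'V' [V'_ne0 dense' side]]]]]] :=
  density_increment t_gt0 M_gt0 NM gV VV0 V_ne0 dense; first by left.
right; rewrite -expnS in dense'.
have cV0 : c \in V0 := subsetP VV0 c cV.
have [PV' QV'] : [disjoint P & V'] /\ [disjoint Q & V'] by split; apply: disjointWr V'V _.
have [cP cQ] : c \notin P /\ c \notin Q by rewrite !(disjointFl _ cV).
have VP x y : x \in P -> y \in V' -> y \in X -> e x y by move=> xP /(subsetP V'V); apply: Pe.
have VQ x y : x \in Q -> y \in V' -> y \notin X -> e x y by move=> xQ /(subsetP V'V); apply: Qe.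
have cV'0 (A : {set T}) : [disjoint A & V'] -> [disjoint c |: A & V'].
  by rewrite !disjoints_subset subUset sub1set inE cV' => ->.
have V'V0 : V' \subset V0 := subset_trans V'V VV0.
have [cX | cNX] := boolP (c \in X).
  exists g', V', P, (c |: Q); split => //.
    split => //; first exact: cV'0.
      by rewrite subUset sub1set cV0.
    by rewrite cardsU1 cQ add1n addnS PQj.
  move=> x y /setU1P [-> yV' yX | xQ]; last exact: VQ.
  by apply: side; rewrite ?cX ?(negbTE yX).
exists g', V', (c |: P), Q; split => //.
  split => //; first exact: cV'0.
    by rewrite subUset sub1set cV0.
  by rewrite cardsU1 cP add1n addSn PQj.
move=> x y /setU1P [-> yV' yX | xP]; last exact: VP.
by apply: side; rewrite ?yX ?(negbTE cNX).
Qed.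

Lemma stage_iter N L : 12 * (t * (t * t)) * (12 * (t * t)) ^ L <= N ->
  stage N 0 -> has_dense_girth6_subgraph V0 e t \/ stage N L.
Proof.
move=> NL s0; suff : forall j, j <= L -> has_dense_girth6_subgraph V0 e t \/ stage N j by apply.
elim=> [_ | j IH jL]; first by right.
by case: (IH (ltnW jL)) => [| sj]; [left | apply: stage_step NL jL sj].
Qed.

Lemma bip_sides_large g V N M k : bip_graph e X g V -> V != set0 -> 0 < M ->
  N * #|V| <= M * narcs g -> (k * M).*2 <= N -> k <= #|V :&: X| /\ k <= #|V :\: X|.
Proof.
move=> [gs _ _ gX gV] V_ne0 M_gt0 dense kN.
set a := #|V :&: X|; set b := #|V :\: X|.
have Vab : #|V| = a + b by rewrite cardsID.
have narcs_ab : narcs g <= (a * b).*2.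
  rewrite -addnn {2}mulnC -!cardsX; apply: leq_trans (leq_card_setU _ _).
  apply/subset_leq_card/subsetP => -[x y]; rewrite inE /= => gxy.
  have yx : g y x by rewrite gs.
  move: (gX _ _ gxy); rewrite !inE /= (gV _ _ gxy) (gV _ _ yx).
  by case: (x \in X); case: (y \in X).
have kab : k * (a + b) <= a * b.
  rewrite -(leq_pmul2l M_gt0).
  have := leq_trans (leq_mul kN (leqnn #|V|)) (leq_trans dense (leq_mul (leqnn M) narcs_ab)).
  rewrite Vab; lia.
have ab_gt0 : 0 < a + b by rewrite -Vab card_gt0.
split; rewrite -(leq_pmul2r ab_gt0); apply: leq_trans kab _.
  by rewrite leq_mul2l leq_addl orbT.
by rewrite mulnC leq_mul2l leq_addr orbT.
Qed.

Lemma complete_pair_witness p (A B : {set T}) : prime p -> t <= p ->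
  t * p <= #|A| -> p * p <= #|B| -> [disjoint A & B] -> A \subset V0 -> B \subset V0 ->
  {in A & B, forall x y, e x y} -> has_dense_girth6_subgraph V0 e t.
Proof.
move=> p_prime tp A_big B_big AB AV0 BV0 eAB.
have [pt pt_inj ptA] : exists2 pt : 'I_t * 'F_p -> T, injective pt & forall u, pt u \in A.
  by apply: exists_injection; rewrite card_prod card_ord card_Fp.
have [ln ln_inj lnB] : exists2 ln : 'F_p * 'F_p -> T, injective ln & forall q, ln q \in B.
  by apply: exists_injection; rewrite card_prod card_Fp.
apply: (incidence_witness p_prime t_gt0 tp pt_inj ln_inj).
- by move=> u q; apply: contraTneq (ptA u) => ->; rewrite (disjointFl AB (lnB q)).
- by move=> u q; rewrite [e (ln q) _]e_sym andbb; apply: eAB.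
- by move=> u; apply: (subsetP AV0).
- by move=> q; apply: (subsetP BV0).
Qed.

Lemma stage_final N L p : prime p -> t <= p -> (t * p).*2 <= L ->
  ((p * p) * (12 * (t * t)) ^ L).*2 <= N -> stage N L -> has_dense_girth6_subgraph V0 e t.
Proof.
move=> p_prime tp tpL pN [g [V [P [Q [[gV VV0 V_ne0 dense] [PV QV PV0 QV0 PQL] Pe Qe]]]]].
have M_gt0 : 0 < (12 * (t * t)) ^ L by rewrite expn_gt0 !muln_gt0 t_gt0.
have [VX VNX] := bip_sides_large gV V_ne0 M_gt0 dense pN.
have [tpP | smallP] := leqP (t * p) #|P|.
  apply: (complete_pair_witness p_prime tp tpP VX); rewrite ?(subset_trans (subsetIl _ _)) //.
    by apply: disjointWr PV; apply: subsetIl.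
  by move=> x y xP /setIP [yV yX]; apply: Pe.
have tpQ : t * p <= #|Q| by move: tpL; rewrite -PQL; lia.
apply: (complete_pair_witness p_prime tp tpQ VNX); rewrite ?(subset_trans (subsetDl _ _)) //.
  by apply: disjointWr QV; apply: subsetDl.
by move=> x y xQ /setDP [yV yX]; apply: Qe.
Qed.

Lemma stage_init N : simple_graph V0 e -> N.*2 * #|V0| <= (nedges e).*2 ->
  narcs e <= (narcs (cut e X)).*2 -> V0 != set0 -> stage N 0.
Proof.
move=> [_ [e_irr eV]] dense cut_large V0_ne0.
exists (cut e X), V0, set0, set0; split.
- split => //.
    split => [x y | x | x y /andP [] | x y /andP [] | x y /andP [/eV /andP []]] //=.
      by rewrite e_sym eq_sym.
    by rewrite e_irr.
  rewrite expn0 mul1n -leq_double; apply: leq_trans cut_large.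
  by rewrite -nedges_double // doubleMl.
- by split; rewrite ?disjoints_subset ?sub0set ?cards0.
- by move=> x y; rewrite inE.
- by move=> x y; rewrite inE.
Qed.

End Iteration.

Lemma fact_leq_expn n : n`! <= n ^ n.
Proof.
elim: n => // n IH; rewrite factS expnS leq_mul2l; apply/orP; right.
by apply: leq_trans IH _; case: n => // n; rewrite leq_exp2r.
Qed.

Lemma exists_prime_between t : 0 < t -> exists2 p, prime p & t <= p <= 2 ^ (t * t).
Proof.
move=> t_gt0; have fact1_gt1 : 1 < t`!.+1 by rewrite ltnS fact_gt0.
exists (pdiv t`!.+1); first exact: pdiv_prime.
apply/andP; split.
  rewrite leqNgt; apply/negP => small_p.
  have d_fact : pdiv t`!.+1 %| t`! by rewrite dvdn_fact // pdiv_gt0 ltnW.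
  have := pdiv_dvd t`!.+1; rewrite -[X in _ %| X]addn1 (dvdn_addr 1 d_fact) dvdn1 => /eqP p1.
  by have := pdiv_prime fact1_gt1; rewrite p1.
apply: leq_trans (dvdn_leq _ (pdiv_dvd _)) _ => //.
apply: leq_ltn_trans (fact_leq_expn t) _.
by rewrite expnM ltn_exp2r // ltn_expl.
Qed.

Lemma budget_exponent u : 0 < u -> (2 * u + 4) + 2 ^ (3 * u + 4) <= (2 ^ (10 * u)).-1.
Proof.
move=> u_gt0; have ux := ltn_expl u (ltnSn 1).
have x2 : 2 <= 2 ^ u by rewrite -{1}(expn1 2) leq_pexp2l.
rewrite expnD ![_ * u]mulnC !expnM; move: (2 ^ u) ux x2 => x ux x2.
have x7 : 2 ^ 7 <= x ^ 7 by rewrite leq_exp2r.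
have -> : x ^ 10 = x ^ 3 * x ^ 7 by rewrite -expnD.
have : 1 <= x ^ 3 by rewrite expn_gt0 (leq_trans _ x2).
have : u <= x ^ 3.
  by apply: leq_trans (ltnW ux) _; rewrite -{1}(expn1 x) leq_pexp2l // (leq_trans _ x2).
nia.
Qed.

Lemma stage_budget t p : 0 < t -> p <= 2 ^ (t * t) ->
  12 * (t * (t * t)) * (12 * (t * t)) ^ (t * p).*2 <= 2 ^ (2 ^ (10 * (t * t))).-1 /\
  ((p * p) * (12 * (t * t)) ^ (t * p).*2).*2 <= 2 ^ (2 ^ (10 * (t * t))).-1.
Proof.
move=> t_gt0; set u := t * t; set L := (t * p).*2 => p_small.
have u_gt0 : 0 < u by rewrite muln_gt0 t_gt0.
have tu : t <= u by rewrite leq_pmulr.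
have ux := ltn_expl u (ltnSn 1).
have pow_L : (12 * u) ^ L <= 2 ^ 2 ^ (3 * u + 4).
  have [-> | L_gt0] := posnP L; first by rewrite expn0 expn_gt0.
  apply: (@leq_trans ((2 ^ (u + 4)) ^ L)).
    by rewrite leq_exp2r // expnD; lia.
  rewrite -expnM leq_pexp2l // expnD [3 * u]mulnC expnM.
  have : L <= 2 * (2 ^ u * 2 ^ u).
    by rewrite /L -mul2n leq_mul2l leq_mul //= (leq_trans tu (ltnW ux)).
  move: (2 ^ u) ux => x ux; nia.
have total : 2 ^ (2 * u + 4) * 2 ^ 2 ^ (3 * u + 4) <= 2 ^ (2 ^ (10 * u)).-1.
  by rewrite -expnD leq_pexp2l // budget_exponent.
have sq_small m : m <= 2 ^ u -> m * m <= 2 ^ (2 * u).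
  by move=> m_small; rewrite mulnC expnM leq_mul.
split; apply: leq_trans total; rewrite ?doubleMl; apply: leq_mul _ pow_L; rewrite expnD.
  have tuu : t * u <= u * u by rewrite leq_mul2r tu orbT.
  by have := sq_small u (ltnW ux); lia.
by have := sq_small p p_small; lia.
Qed.

Lemma expn_Nat_pow m n : m ^ n = Nat.pow m n.
Proof. by elim: n => // n IH; rewrite expnS IH mulnE. Qed.

Lemma Rpower2_INR n : Rpower 2 (INR n) = INR (2 ^ n).
Proof. by rewrite Rpower_pow; [rewrite expn_Nat_pow pow_INR | lra]. Qed.

Lemma Rpower_tower n : Rpower 2 (Rpower 2 (INR 10 * INR n ^ 2)) = INR (2 ^ 2 ^ (10 * (n * n))).
Proof.
have -> : (INR 10 * INR n ^ 2 = INR (10 * (n * n)))%R by rewrite !mulnE !mult_INR /=; ring.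
by rewrite !Rpower2_INR.
Qed.

Theorem theorem3 :
  exists c : R, (0 < c)%R /\
  forall (t : nat), 0 < t ->
  forall (T : finType) (V : {set T}) (e : rel T),
    simple_graph V e -> V != set0 ->
    (Rpower 2 (Rpower 2 (c * INR t ^ 2)) <= avg_degree V e)%R ->
    exists (V' : {set T}) (f : rel T),
      subgraph V' f V e /\ V' != set0 /\
      (INR t <= avg_degree V' f)%R /\ girth_ge f 6.
Proof.
exists (INR 10); split; first by apply: lt_0_INR; apply/ltP.
move=> t t_gt0 T V e e_simple V_ne0; rewrite Rpower_tower avg_degree_ge // => dense.
have [e_sym [e_irr _]] := e_simple.
have [X cut_large] := exists_large_cut e_irr.
have [p p_prime /andP [tp p_small]] := exists_prime_between t_gt0.
have [budget_iter budget_final] := stage_budget t_gt0 p_small.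
set N := 2 ^ (2 ^ (10 * (t * t))).-1 in budget_iter budget_final.
have s0 : stage e t V X N 0.
  apply: (stage_init t e_sym e_simple _ cut_large V_ne0).
  by rewrite -mul2n -expnS prednK ?expn_gt0.
have [// | sL] := stage_iter t_gt0 budget_iter s0.
exact (stage_final e_sym t_gt0 p_prime tp (leqnn _) budget_final sL).
Qed.
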